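(* Let $E_0\colon\Gamma(V_0)\to\Gamma(V_1)$ be a linear differential operator between vector bundles and suppose there exists a differential operator $H_0\colon\Gamma(V_1)\to\Gamma(V_0)$ with $H_0\circ E_0=\mathrm{id}$. Then the sequence $$V_0\xrightarrow{\;E_0\;}V_1\xrightarrow{\;\mathrm{id}-E_0H_0\;}V_1\xrightarrow{\;H_0\;}V_0$$ is a full compatibility complex for $E_0$ of length 3.
   Context: For a linear differential operator $K$, a differential operator $L$ with $L\circ K=0$ is a compatibility operator for $K$; it is complete if every differential operator $L'$ with $L'\circ K=0$ factors as $L'=L''\circ L$ for some differential operator $L''$. A complex of differential operators $K_l$ is a (full) compatibility complex for $K$ if $K_0=K$ and each $K_l$ ($l\ge1$) is a complete compatibility operator for $K_{l-1}$; ''length 3'' means the complex consists of these three operators (the next complete compatibility operator being zero). *)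

From HB Require Import structures.
From mathcomp Require Import all_boot all_algebra.
Set Implicit Arguments. Unset Strict Implicit. Unset Printing Implicit Defensive.
Import GRing.Theory.
Local Open Scope ring_scope.

(* An abstract setting of "linear differential operators between vector
   bundles" over a ring of scalars R (e.g. R = the reals):
   - [bundle] : the vector bundles V,
   - [sec V]  : the R-module Gamma(V) of sections of V,
   - [is_do f]: f : Gamma(V) -> Gamma(W) is a (linear) differential operator. *)
Record diffop_setting (R : pzRingType) := DiffopSetting {
  bundle : Type;
  sec : bundle -> lmodType R;
  is_do : forall V W : bundle, (sec V -> sec W) -> Prop;
  is_do_linear : forall V W (f : sec V -> sec W), is_do f -> linear f;
  is_do_id : forall V, is_do (fun s : sec V => s);
  is_do_zero : forall V W, is_do (fun _ : sec V => (0 : sec W));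
  is_do_comp : forall U V W (f : sec U -> sec V) (g : sec V -> sec W),
      is_do f -> is_do g -> is_do (fun s => g (f s));
  is_do_add : forall V W (f g : sec V -> sec W),
      is_do f -> is_do g -> is_do (fun s => f s + g s);
  is_do_opp : forall V W (f : sec V -> sec W),
      is_do f -> is_do (fun s => - f s)
}.

Arguments is_do {R} d {V W} : rename.

Definition compat_op (R : pzRingType) (C : diffop_setting R) (V W U : bundle C)
    (K : sec V -> sec W) (L : sec W -> sec U) : Prop :=
  is_do C L /\ (forall s, L (K s) = 0).

Definition complete_compat (R : pzRingType) (C : diffop_setting R)
    (V W U : bundle C) (K : sec V -> sec W) (L : sec W -> sec U) : Prop :=
  compat_op K L /\
  forall (U' : bundle C) (L' : sec W -> sec U'),
    is_do C L' -> (forall s, L' (K s) = 0) ->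
    exists L'' : sec U -> sec U', is_do C L'' /\ forall s, L' s = L'' (L s).

Definition full_compat_complex3 (R : pzRingType) (C : diffop_setting R)
    (V0 V1 V2 V3 : bundle C) (K0 : sec V0 -> sec V1) (K1 : sec V1 -> sec V2)
    (K2 : sec V2 -> sec V3) : Prop :=
  is_do C K0 /\ complete_compat K0 K1 /\ complete_compat K1 K2 /\
  complete_compat K2 (fun _ : sec V3 => (0 : sec V3)).

(** A left inverse [H0] of [E0] splits the sequence: on [V1] one has
    [id = E0 H0 + (id - E0 H0)] and on [V0] one has [id = H0 E0]. Each such
    identity [id = K T + S L] is a contracting homotopy, and any differential
    operator [L'] killing [K] then factors as [L' = (L' S) L]; this gives the
    completeness of all three compatibility operators at once. *)
From HB Require Import structures.
From mathcomp Require Import all_boot all_algebra.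
Import GRing.Theory.
Local Open Scope ring_scope.

Section DiffopSetting.

Variables (R : pzRingType) (C : diffop_setting R).

Lemma is_doD (V W : bundle C) (f : sec V -> sec W) :
  is_do C f -> {morph f : u v / u + v}.
Proof. by move=> /is_do_linear lin_f u v; have := lin_f 1 u v; rewrite !scale1r. Qed.

Lemma is_doB (V W : bundle C) (f : sec V -> sec W) :
  is_do C f -> {morph f : u v / u - v}.
Proof.
move=> /is_do_linear lin_f u v.
have := lin_f (-1) v u; rewrite !scaleN1r => fNvu.
by rewrite addrC fNvu addrC.
Qed.

Lemma complete_compat_of_homotopy (V W U : bundle C)
    (K : sec V -> sec W) (L : sec W -> sec U)
    (T : sec W -> sec V) (S : sec U -> sec W) :
  is_do C L -> (forall s, L (K s) = 0) -> is_do C S ->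
  (forall s, s = K (T s) + S (L s)) ->
  complete_compat K L.
Proof.
move=> do_L LK0 do_S homotopy; split; first by [].
move=> U' L' do_L' L'K0; exists (fun t => L' (S t)); split.
  exact: is_do_comp.
by move=> s; rewrite {1}[s]homotopy is_doD // L'K0 add0r.
Qed.

End DiffopSetting.

Arguments complete_compat_of_homotopy {R C V W U K L} T S.

Theorem lemma5p1 (R : pzRingType) (C : diffop_setting R) (V0 V1 : bundle C)
    (E0 : sec V0 -> sec V1) (H0 : sec V1 -> sec V0) :
  is_do C E0 -> is_do C H0 -> (forall s, H0 (E0 s) = s) ->
  full_compat_complex3 E0 (fun s => s - E0 (H0 s)) H0.
Proof.
move=> do_E0 do_H0 H0E0.
have do_E1 : is_do C (fun s : sec V1 => s - E0 (H0 s)).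
  by apply: is_do_add; [exact: is_do_id | apply/is_do_opp/is_do_comp].
split; first by [].
split.
  apply: (complete_compat_of_homotopy H0 id) => //.
  - by move=> s; rewrite H0E0 subrr.
  - exact: is_do_id.
  - by move=> s; rewrite addrC subrK.
split.
  apply: (complete_compat_of_homotopy id E0) => //.
  - by move=> s; rewrite is_doB // H0E0 subrr.
  - by move=> s; rewrite subrK.
apply: (complete_compat_of_homotopy E0 (fun _ : sec V0 => 0 : sec V0)) => //.
- exact: is_do_zero.
- exact: is_do_zero.
- by move=> s; rewrite H0E0 addr0.
Qed.
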